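(* Let $(M,\circ,\mathrm{OR})$ be a free $\mathbb{D}$-module of rank 3 with scalar product and orientation, and let $z_1,z_2,z_3\in M\setminus\epsilon M$ be pairwise $\mathbb{D}$-linearly independent (equivalently, no two of their axes are parallel). Then the following are equivalent: (i) $z_1\times z_2\circ z_3=0$; (ii) some $z_i$ is a $\mathbb{D}$-linear combination of the other two; (iii) the three axes intersect orthogonally a common line of $E$. If these hold, then every $z_i$ is a $\mathbb{D}$-linear combination of the other two.
   Context: $\mathbb{D}=\{a+\epsilon b: a,b\in\mathbb{R}\}$, $\epsilon^2=0$. Scalar product: symmetric $\mathbb{D}$-bilinear $\circ:M\times M\to\mathbb{D}$ with $\mathfrak{Re}(x\circ x)\ge0$, equality iff $x\in\epsilon M$; orientation: one of the two classes of ordered bases under $\{b'_j=A_{jk}b_k\}\sim\{b_k\}$ iff $\det\mathfrak{Re}(A)>0$. Cross product $x\times y=x^iy^j\epsilon_{ijk}m_k$ in any positive orthonormal basis $\{m_i\}$; $z_1\times z_2\circ z_3:=(z_1\times z_2)\circ z_3$. $V=M/\epsilon M$, $\pi$ the quotient map. $E$ is the set of real 3-dimensional subspaces $P\subset M$ with $\mathfrak{Du}(x\circ y)=0$ for $x,y\in P$ and $P\cap\epsilon M=\{0\}$, a Euclidean affine space over $V$ (with $B-A:=d^ke_k$ where $e^B_i=e^A_i+\epsilon\,\epsilon_{ijk}d^ke^A_j$, $\{e_i\}$ positive orthonormal in $V$, $e^P_i\in P$ its lift). Each $z\in M\setminus\epsilon M$ is uniquely $z=(a+\epsilon b)u$ with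 $a>0$, $b\in\mathbb{R}$, $u\circ u=1$; its axis is the line $\{P\in E: u\in P\}$, with direction $\pi(u)$. *)

From HB Require Import structures.
From mathcomp Require Import all_boot all_order all_algebra.
From mathcomp Require Import ring.
From mathcomp Require Import reals.
Set Implicit Arguments.
Unset Strict Implicit.
Unset Printing Implicit Defensive.
Import Order.TTheory GRing.Theory Num.Theory.
Local Open Scope ring_scope.

(* Dual numbers  D = { a + eps b },  eps^2 = 0, as pairs (a, b).        *)
Definition dual (R : Type) : Type := (R * R)%type.

Section DualRing.
Variable R : comNzRingType.

HB.instance Definition _ := Choice.copy (dual R) (R * R)%type.
HB.instance Definition _ := GRing.Zmodule.copy (dual R) (R * R)%type.

Definition dual_one : dual R := (1, 0).
Definition dual_mul (x y : dual R) : dual R :=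
  (x.1 * y.1, x.1 * y.2 + x.2 * y.1).

Lemma dual_mulA : associative dual_mul.
Proof. by case=> a b [c d] [e f]; rewrite /dual_mul /=; congr pair; ring. Qed.
Lemma dual_mulC : commutative dual_mul.
Proof. by case=> a b [c d]; rewrite /dual_mul /=; congr pair; ring. Qed.
Lemma dual_mul1 : left_id dual_one dual_mul.
Proof. by case=> a b; rewrite /dual_mul /dual_one /=; congr pair; ring. Qed.
Lemma dual_mulDl : left_distributive dual_mul +%R.
Proof. by case=> a b [c d] [e f]; rewrite /dual_mul /=; congr pair; rewrite /= ?mulrDl ?mulrDr; ring. Qed.
Lemma dual_one_neq0 : dual_one != 0.
Proof. by apply/eqP => -[] /eqP; rewrite oner_eq0. Qed.

HB.instance Definition _ := GRing.Zmodule_isComNzRing.Build (dual R)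
  dual_mulA dual_mulC dual_mul1 dual_mulDl dual_one_neq0.

Definition Re (x : dual R) : R := x.1.
Definition Du (x : dual R) : R := x.2.
Definition eps : dual R := (0, 1).
Definition dualr (a : R) : dual R := (a, 0).

End DualRing.

(* Setting: M a D-module, sp a scalar product, m a positive            *)
(* orthonormal3 basis (the orientation OR is the class of m).            *)
Section Setting.
Variable R : realType.
Local Notation D := (dual R).
Variable M : lmodType D.

Definition rscale (r : R) (x : M) : M := dualr r *: x.

Definition in_epsM (x : M) : Prop := exists y : M, x = eps R *: y.

Definition D_free (b : 'I_3 -> M) : Prop :=
  forall c : 'I_3 -> D, \sum_i c i *: b i = 0 -> forall i, c i = 0.
Definition D_spanning (b : 'I_3 -> M) : Prop :=
  forall x : M, exists c : 'I_3 -> D, x = \sum_i c i *: b i.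
Definition D_basis (b : 'I_3 -> M) : Prop := D_free b /\ D_spanning b.

Definition scalar_product (sp : M -> M -> D) : Prop :=
  [/\ forall x y, sp x y = sp y x,
      forall (a : D) x y z, sp (a *: x + y) z = a * sp x z + sp y z,
      forall x, 0 <= Re (sp x x)
    & forall x, Re (sp x x) = 0 <-> in_epsM x].

Definition orthonormal3 (sp : M -> M -> D) (m : 'I_3 -> M) : Prop :=
  forall i j, sp (m i) (m j) = (i == j)%:R.

(* Levi-Civita symbol on indices 0,1,2 *)
Definition levi (i j k : 'I_3) : R :=
  ((j%:R - i%:R) * (k%:R - j%:R) * (k%:R - i%:R)) / 2%:R.

(* cross product in the positive orthonormal3 basis m; the coordinates
   of x in the orthonormal3 basis m are x^i = x o m_i *)
Definition cross (sp : M -> M -> D) (m : 'I_3 -> M) (x y : M) : M :=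
  \sum_i \sum_j \sum_k (sp x (m i) * sp y (m j) * dualr (levi i j k)) *: m k.

Definition real_span3 (p : 'I_3 -> M) (x : M) : Prop :=
  exists r : 'I_3 -> R, x = \sum_i rscale (r i) (p i).
Definition real_free3 (p : 'I_3 -> M) : Prop :=
  forall r : 'I_3 -> R, \sum_i rscale (r i) (p i) = 0 -> forall i, r i = 0.
Definition real_subspace3 (P : M -> Prop) : Prop :=
  exists p : 'I_3 -> M, real_free3 p /\ forall x, P x <-> real_span3 p x.

Definition in_E (sp : M -> M -> D) (P : M -> Prop) : Prop :=
  [/\ real_subspace3 P,
      forall x y, P x -> P y -> Du (sp x y) = 0
    & forall x, P x -> in_epsM x -> x = 0].

(* x is the lift e^P_i to P of the basis vector e_i = pi(m_i) of V *)
Definition is_lift (m : 'I_3 -> M) (P : M -> Prop) (i : 'I_3) (x : M) : Prop :=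
  P x /\ in_epsM (x - m i).

(* Q = P + d, where d = d^k e_k in V (coordinates w.r.t. e_k = pi(m_k)):
   e^Q_i = e^P_i + eps eps_ijk d^k e^P_j *)
Definition translate (m : 'I_3 -> M) (P : M -> Prop) (d : 'I_3 -> R)
    (Q : M -> Prop) : Prop :=
  forall eP eQ : 'I_3 -> M,
    (forall i, is_lift m P i (eP i)) -> (forall i, is_lift m Q i (eQ i)) ->
    forall i, eQ i = eP i + eps R *: \sum_j \sum_k rscale (levi i j k * d k) (eP j).

Definition on_line (m : 'I_3 -> M) (A : M -> Prop) (v : 'I_3 -> R)
    (Q : M -> Prop) : Prop :=
  exists t : R, translate m A (fun k => t * v k) Q.

Definition axis_unit (sp : M -> M -> D) (z u : M) : Prop :=
  sp u u = 1 /\ exists a b : R, 0 < a /\ z = ((a, b) : D) *: u.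

(* the axis of z meets the line (A, v) of E orthogonally: it has a point
   on the line, and its direction pi(u) is orthogonal in V to v^k e_k,
   the inner product on V being <pi x, pi y> = Re (x o y) *)
Definition axis_meets_orth (sp : M -> M -> D) (m : 'I_3 -> M) (z : M)
    (A : M -> Prop) (v : 'I_3 -> R) : Prop :=
  exists u : M, axis_unit sp z u /\
   (exists P : M -> Prop, in_E sp P /\ P u /\ on_line m A v P) /\
   Re (sp u (\sum_k rscale (v k) (m k))) = 0.

Definition D_comb (x y z : M) : Prop :=
  exists a b : D, x = a *: y + b *: z.

Definition D_indep2 (x y : M) : Prop :=
  forall a b : D, a *: x + b *: y = 0 -> a = 0 /\ b = 0.

End Setting.

(* In the orthonormal basis [m] every [x : M] is [p + eps q] with real
   coordinate vectors [p = rpart x] and [q = dpart x], and the scalar, cross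
   and triple products become the dual extensions of the Euclidean ones: (i)
   says that [det (p1, p2, p3)] and its derivative in the direction
   [(q1, q2, q3)] vanish.  Non-parallel axes give [p1 x p2 != 0], so Cramer's
   rule, applied to real and dual parts, solves [z3 = a z1 + b z2] over [D];
   by symmetry of (i) this holds for every [z_i].
   A point of [E] is the set of the [p + eps (c x p)] for a position [c], and
   the axis of [p + eps q] passes through [c] iff [c x p] is the part of [q]
   orthogonal to [p].  Under (ii) all [p_i] are orthogonal to [v = p1 x p2],
   and the condition that the line through [a] with direction [v] meets the
   axes is linear in [a], solvable for the first two axes and then automatic
   for the third.  Conversely, directions orthogonal to a common [v] are
   coplanar, and axes through points [a + t_i v] make the dual part of the
   triple product vanish. *)

From HB Require Import structures.
From mathcomp Require Import all_boot all_order all_algebra.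
From mathcomp Require Import reals ring lra.
Set Implicit Arguments. Unset Strict Implicit. Unset Printing Implicit Defensive.
Import Order.TTheory GRing.Theory Num.Theory.
Local Open Scope ring_scope.

Definition o0 : 'I_3 := @Ordinal 3 0 isT.
Definition o1 : 'I_3 := @Ordinal 3 1 isT.
Definition o2 : 'I_3 := @Ordinal 3 2 isT.

Lemma ord3P (i : 'I_3) : i = o0 \/ i = o1 \/ i = o2.
Proof.
by case: i => [[|[|[|n]]] Hn]; [left|right; left|right; right|by []]; exact: val_inj.
Qed.

Lemma big_ord3 (V : nmodType) (F : 'I_3 -> V) : \sum_(i < 3) F i = F o0 + F o1 + F o2.
Proof.
rewrite !big_ord_recr big_ord0 /= add0r.
by congr (F _ + F _ + F _); apply: val_inj.
Qed.

Section Vec3.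
Variable R : realFieldType.
Local Notation vec := (R * R * R)%type.

Definition vzero : vec := (0, 0, 0).
Definition vadd (u w : vec) : vec := (u.1.1 + w.1.1, u.1.2 + w.1.2, u.2 + w.2).
Definition vscale (a : R) (u : vec) : vec := (a * u.1.1, a * u.1.2, a * u.2).
Definition vdot (u w : vec) : R := u.1.1 * w.1.1 + u.1.2 * w.1.2 + u.2 * w.2.
Definition vcross (u w : vec) : vec :=
  (u.1.2 * w.2 - u.2 * w.1.2, u.2 * w.1.1 - u.1.1 * w.2, u.1.1 * w.1.2 - u.1.2 * w.1.1).
Definition vdet (u w x : vec) : R := vdot (vcross u w) x.

(* The derivative of [vdet] at [(p1, p2, p3)] in the direction [(q1, q2, q3)]:
   the dual part of the determinant of the dual vectors [p_i + eps q_i]. *)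
Definition vdet_diff (p1 p2 p3 q1 q2 q3 : vec) : R :=
  vdet q1 p2 p3 + vdet p1 q2 p3 + vdet p1 p2 q3.

Definition vof (f : 'I_3 -> R) : vec := (f o0, f o1, f o2).
Definition vget (u : vec) (i : 'I_3) : R :=
  if val i == 0%N then u.1.1 else if val i == 1%N then u.1.2 else u.2.
Definition vunit (i : 'I_3) : vec := vof (fun j => (j == i)%:R).

Lemma vec3_eq (u w : vec) : u = w <-> [/\ u.1.1 = w.1.1, u.1.2 = w.1.2 & u.2 = w.2].
Proof.
split=> [-> //|]; case: u => [[? ?] ?]; case: w => [[? ?] ?] /=.
by case=> -> -> ->.
Qed.

Lemma vgetK (u : vec) : vof (vget u) = u.
Proof. by case: u => [[]]. Qed.

Lemma vofK (f : 'I_3 -> R) i : vget (vof f) i = f i.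
Proof. by case: (ord3P i) => [|[|]] ->. Qed.

Lemma vof_neq0 (f : 'I_3 -> R) : (exists k, f k != 0) -> vof f <> vzero.
Proof.
case=> k fk /vec3_eq [/= f0 f1 f2]; move: fk.
by case: (ord3P k) => [|[|]] ->; rewrite ?f0 ?f1 ?f2 eqxx.
Qed.

Lemma vget_neq0 (u : vec) : u <> vzero -> exists k, vget u k != 0.
Proof.
move=> u0; case: (eqVneq u.1.1 0) => [x0|]; last by exists o0.
case: (eqVneq u.1.2 0) => [y0|]; last by exists o1.
case: (eqVneq u.2 0) => [z0|]; last by exists o2.
by case: u0; apply/vec3_eq.
Qed.

Lemma vdot_self_eq0 (u : vec) : vdot u u = 0 -> u = vzero.
Proof.
case: u => [[x y] z]; rewrite /vdot /= => u0.
by apply/vec3_eq => /=; split; apply/eqP; rewrite -sqrf_eq0; apply/eqP; nra.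
Qed.

Lemma vdot_self_gt0 (u : vec) : u <> vzero -> 0 < vdot u u.
Proof.
move=> u0; rewrite lt_neqAle eq_sym; apply/andP; split.
  by apply/eqP => /vdot_self_eq0.
by case: u {u0} => [[x y] z]; rewrite /vdot /=; nra.
Qed.

Lemma vdot_self_neq0 (u : vec) : u <> vzero -> vdot u u != 0.
Proof. by move=> /vdot_self_gt0 /gt_eqF ->. Qed.

Lemma vscale_eqK (k : R) (u w : vec) : k != 0 -> vscale k u = w -> u = vscale k^-1 w.
Proof.
move=> k0 <-; apply/vec3_eq; rewrite /vscale /=.
by split; rewrite mulrA mulVf ?mul1r.
Qed.

Lemma vcross_vunit_inj (b c : vec) : (forall i, vcross b (vunit i) = vcross c (vunit i)) -> b = c.
Proof.
move=> bc; move: (bc o0) (bc o1) (bc o2).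
rewrite /vunit /vof /vcross /= => /vec3_eq[/= ? ? ?] /vec3_eq[/= ? ? ?] /vec3_eq[/= ? ? ?].
by apply/vec3_eq; split; lra.
Qed.

(* Cramer's rule, solved for [p3] in the basis [p1, p2, p1 x p2]. *)
Lemma vdet_eq0_span (p1 p2 p3 : vec) : vcross p1 p2 <> vzero -> vdet p1 p2 p3 = 0 ->
  exists a b : R, p3 = vadd (vscale a p1) (vscale b p2).
Proof.
set n := vcross p1 p2 => n0 det0.
have cramer : vscale (vdot n n) p3 = vadd (vscale (vdet p1 p2 p3) n)
    (vadd (vscale (vdot (vcross p3 p2) n) p1) (vscale (vdot (vcross p1 p3) n) p2)).
  by apply/vec3_eq; rewrite /n /vdet /vscale /vadd /vdot /vcross /=; split; ring.
set A := vdot (vcross p3 p2) n in cramer *; set B := vdot (vcross p1 p3) n in cramer *.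
exists ((vdot n n)^-1 * A), ((vdot n n)^-1 * B).
rewrite (vscale_eqK (vdot_self_neq0 n0) cramer) det0.
by apply/vec3_eq; rewrite /vscale /vadd /=; split; ring.
Qed.

Lemma vdet_diff_eq0_span (p1 p2 p3 q1 q2 q3 : vec) : vcross p1 p2 <> vzero ->
    vdet p1 p2 p3 = 0 -> vdet_diff p1 p2 p3 q1 q2 q3 = 0 ->
  exists a b c d : R, p3 = vadd (vscale a p1) (vscale b p2) /\
    q3 = vadd (vadd (vscale a q1) (vscale c p1)) (vadd (vscale b q2) (vscale d p2)).
Proof.
move=> n0 det0 ddet0; have [a [b p3E]] := vdet_eq0_span n0 det0.
set w := vadd q3 (vadd (vscale (- a) q1) (vscale (- b) q2)).
have detw : vdet p1 p2 w = 0.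
  by rewrite -ddet0 p3E /w /vdet_diff /vdet /vdot /vcross /vadd /vscale /=; ring.
have [c [d wE]] := vdet_eq0_span n0 detw.
exists a, b, c, d; split=> //; move/vec3_eq: wE; rewrite /w /vadd /vscale /= => -[? ? ?].
by apply/vec3_eq; rewrite /vadd /vscale /=; split; lra.
Qed.

Lemma vdot2_solvable (g1 g2 : vec) (s1 s2 : R) : vcross g1 g2 <> vzero ->
  exists a, vdot a g1 = s1 /\ vdot a g2 = s2.
Proof.
set n := vcross g1 g2 => n0; set N := vdot n n; have N0 : N != 0 := vdot_self_neq0 n0.
set a := vscale N^-1 (vadd (vscale s1 (vcross g2 n)) (vscale s2 (vcross n g1))).
have aE g : vdot a g = N^-1 * (s1 * vdot (vcross g2 n) g + s2 * vdot (vcross n g1) g).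
  by rewrite /a /vdot /vscale /vadd /=; ring.
have e11 : vdot (vcross g2 n) g1 = N by rewrite /N /n /vdot /vcross /=; ring.
have e21 : vdot (vcross n g1) g1 = 0 by rewrite /n /vdot /vcross /=; ring.
have e12 : vdot (vcross g2 n) g2 = 0 by rewrite /n /vdot /vcross /=; ring.
have e22 : vdot (vcross n g1) g2 = N by rewrite /N /n /vdot /vcross /=; ring.
by exists a; rewrite !aE e11 e21 e12 e22 !mulr0 addr0 add0r !(mulrC _ N) !mulKf.
Qed.

(* For a dual vector [p + eps q] with [p != 0], the component of [q] along [p]
   is its pitch; what remains is the moment, and the axis is the line of the
   points [c] with [vcross c p = moment p q]. *)
Definition moment (p q : vec) : vec := vadd q (vscale (- (vdot q p / vdot p p)) p).

Definition axis_meets (p q a v : vec) : Prop :=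
  exists t, moment p q = vcross (vadd a (vscale t v)) p.

Lemma vdot_moment (p q : vec) : p <> vzero -> vdot p (moment p q) = 0.
Proof.
move=> p0; have -> : vdot p (moment p q) = vdot q p - vdot q p / vdot p p * vdot p p.
  by rewrite /moment /vdot /vadd /vscale /=; ring.
by rewrite divfK ?subrr ?vdot_self_neq0.
Qed.

Lemma orthogonal_pair_colinear (p v w : vec) : p <> vzero -> v <> vzero ->
  vdot p v = 0 -> vdot w p = 0 -> vdot w v = 0 -> exists t, w = vscale t (vcross v p).
Proof.
move=> p0 v0 pv wp wv; set n := vcross v p.
have n0 : vdot n n != 0.
  have -> : vdot n n = vdot v v * vdot p p - vdot p v * vdot p v.
    by rewrite /n /vdot /vcross /=; ring.
  by rewrite pv mulr0 subr0 mulf_neq0 ?vdot_self_neq0.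
have wE : vscale (vdot n n) w = vadd (vscale (vdot n w) n)
    (vcross n (vadd (vscale (vdot w p) v) (vscale (- vdot w v) p))).
  by apply/vec3_eq; rewrite /n /vscale /vadd /vdot /vcross /=; split; ring.
set k := vdot n w in wE *; exists ((vdot n n)^-1 * k).
rewrite (vscale_eqK n0 wE) wp wv.
by apply/vec3_eq; rewrite /vscale /vadd /vcross /=; split; ring.
Qed.

Lemma moment_meets_line (a v p q : vec) : p <> vzero -> v <> vzero ->
  vdot p v = 0 -> vdot q v = vdot a (vcross p v) -> axis_meets p q a v.
Proof.
move=> p0 v0 pv qv; set w := vadd (moment p q) (vscale (-1) (vcross a p)).
have wp : vdot w p = 0.
  have -> : vdot w p = vdot p (moment p q) by rewrite /w /vdot /vadd /vscale /vcross /=; ring.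
  exact: vdot_moment.
have wv : vdot w v = 0.
  have -> : vdot w v = vdot q v - vdot q p / vdot p p * vdot p v - vdot a (vcross p v).
    by rewrite /w /moment /vdot /vadd /vscale /vcross /=; ring.
  by rewrite pv qv mulr0 subr0 subrr.
have [t wE] := orthogonal_pair_colinear p0 v0 pv wp wv.
exists t; move/vec3_eq: wE; rewrite /w /vadd /vscale /vcross /= => -[? ? ?].
by apply/vec3_eq; rewrite /vadd /vscale /vcross /=; split; lra.
Qed.

(* The line through [a] with direction [p1 x p2] is the common perpendicular:
   [a] is found by imposing the two linear incidence conditions of
   [moment_meets_line] for the first two axes; the third one follows. *)
Lemma common_perpendicular (p1 p2 p3 q1 q2 q3 : vec) (a0 a1 b0 b1 : R) :
    p1 <> vzero -> p2 <> vzero -> p3 <> vzero -> vcross p1 p2 <> vzero ->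
    p3 = vadd (vscale a0 p1) (vscale b0 p2) ->
    q3 = vadd (vadd (vscale a0 q1) (vscale a1 p1)) (vadd (vscale b0 q2) (vscale b1 p2)) ->
  exists a, let v := vcross p1 p2 in
    [/\ axis_meets p1 q1 a v, axis_meets p2 q2 a v & axis_meets p3 q3 a v].
Proof.
move=> p1n0 p2n0 p3n0 v0 p3E q3E; set v := vcross p1 p2 in v0 *.
have p1v : vdot p1 v = 0 by rewrite /v /vdot /vcross /=; ring.
have p2v : vdot p2 v = 0 by rewrite /v /vdot /vcross /=; ring.
have p3v : vdot p3 v = 0 by rewrite p3E /v /vdot /vscale /vadd /vcross /=; ring.
have g0 : vcross (vcross p1 v) (vcross p2 v) <> vzero.
  have -> : vcross (vcross p1 v) (vcross p2 v) = vscale (vdot v v) v.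
    by apply/vec3_eq; rewrite /v /vscale /vdot /vcross /=; split; ring.
  move=> vv0; suff : vdot v v * vdot v v = 0 by apply/eqP; rewrite mulf_neq0 ?vdot_self_neq0.
  by have := congr1 (vdot v) vv0; rewrite /vdot /vscale /vzero /= !mulr0 !addr0 => <-; ring.
have [a [a1E a2E]] := vdot2_solvable (vdot q1 v) (vdot q2 v) g0.
exists a; split; apply: moment_meets_line => //.
have -> : vdot q3 v = a0 * vdot q1 v + b0 * vdot q2 v + a1 * vdot p1 v + b1 * vdot p2 v.
  by rewrite q3E /vdot /vadd /vscale /=; ring.
have -> : vdot a (vcross p3 v) = a0 * vdot a (vcross p1 v) + b0 * vdot a (vcross p2 v).
  by rewrite p3E /vdot /vadd /vscale /vcross /=; ring.
by rewrite a1E a2E p1v p2v !mulr0 !addr0.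
Qed.

Lemma orthogonal_vdet_eq0 (v r1 r2 r3 : vec) : v <> vzero ->
  vdot r1 v = 0 -> vdot r2 v = 0 -> vdot r3 v = 0 -> vdet r1 r2 r3 = 0.
Proof.
move=> v0 r1v r2v r3v.
have : vdet r1 r2 r3 * vdot v v = vdot r1 v * vdot (vcross r2 r3) v
    + vdot r2 v * vdot (vcross r3 r1) v + vdot r3 v * vdot (vcross r1 r2) v.
  by rewrite /vdet /vdot /vcross /=; ring.
rewrite r1v r2v r3v !mul0r !addr0 => /eqP.
by rewrite mulf_eq0 (negbTE (vdot_self_neq0 v0)) orbF => /eqP.
Qed.

(* Three axes [(al_i + eps be_i) (r_i + eps (c_i x r_i))] meeting the line through [a] with
   direction [v] orthogonally, at the points [c_i = a + t_i v]. *)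
Lemma common_perpendicular_vdet_eq0 (a v r1 r2 r3 : vec) (t1 t2 t3 al1 al2 al3 be1 be2 be3 : R) :
    v <> vzero -> vdot r1 v = 0 -> vdot r2 v = 0 -> vdot r3 v = 0 ->
  let q r t al be := vadd (vscale al (vcross (vadd a (vscale t v)) r)) (vscale be r) in
  vdet (vscale al1 r1) (vscale al2 r2) (vscale al3 r3) = 0 /\
  vdet_diff (vscale al1 r1) (vscale al2 r2) (vscale al3 r3)
    (q r1 t1 al1 be1) (q r2 t2 al2 be2) (q r3 t3 al3 be3) = 0.
Proof.
move=> v0 r1v r2v r3v q; have det0 := orthogonal_vdet_eq0 v0 r1v r2v r3v.
split.
  have -> : vdet (vscale al1 r1) (vscale al2 r2) (vscale al3 r3) = al1 * al2 * al3 * vdet r1 r2 r3.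
    by rewrite /vdet /vdot /vcross /vscale /=; ring.
  by rewrite det0 mulr0.
have -> : vdet_diff (vscale al1 r1) (vscale al2 r2) (vscale al3 r3)
    (q r1 t1 al1 be1) (q r2 t2 al2 be2) (q r3 t3 al3 be3) =
  al1 * al2 * al3 * (t1 * (vdot r2 v * vdot r1 r3 - vdot r3 v * vdot r1 r2)
                  + t2 * (vdot r3 v * vdot r2 r1 - vdot r1 v * vdot r2 r3)
                  + t3 * (vdot r1 v * vdot r3 r2 - vdot r2 v * vdot r3 r1))
  + (be1 * al2 * al3 + al1 * be2 * al3 + al1 * al2 * be3) * vdet r1 r2 r3.
  by rewrite /q /vdet_diff /vdet /vdot /vcross /vscale /vadd /=; ring.
by rewrite r1v r2v r3v det0; ring.
Qed.

End Vec3.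

Arguments vzero {R}.
Arguments vunit {R}.

Section DualArith.
Variable R : comNzRingType.

Lemma dual_addE (a b : dual R) : a + b = (a.1 + b.1, a.2 + b.2). Proof. by []. Qed.
Lemma dual_mulE (a b : dual R) : a * b = (a.1 * b.1, a.1 * b.2 + a.2 * b.1). Proof. by []. Qed.
Lemma dual_oppE (a : dual R) : - a = (- a.1, - a.2). Proof. by []. Qed.
Lemma dual_oneE : 1 = (1, 0) :> dual R. Proof. by []. Qed.

End DualArith.

Section Coordinates.
Variable R : realType.
Local Notation D := (dual R).
Local Notation vec := (R * R * R)%type.
Variable M : lmodType D.
Variable sp : M -> M -> D.
Variable m : 'I_3 -> M.
Hypothesis sp_scalar : scalar_product sp.
Hypothesis m_basis : D_basis m.
Hypothesis m_orthonormal : orthonormal3 sp m.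

Lemma spC x y : sp x y = sp y x. Proof. by case: sp_scalar. Qed.

Lemma sp_lin a x y z : sp (a *: x + y) z = a * sp x z + sp y z.
Proof. by case: sp_scalar. Qed.

Lemma sp0 z : sp 0 z = 0.
Proof.
have := sp_lin 1 0 0 z; rewrite scaler0 addr0 mul1r => sp00.
by apply: (@addrI _ (sp 0 z)); rewrite addr0 -sp00.
Qed.

Lemma spD x y z : sp (x + y) z = sp x z + sp y z.
Proof. by rewrite -[x]scale1r sp_lin mul1r scale1r. Qed.

Lemma spZ a x z : sp (a *: x) z = a * sp x z.
Proof. by rewrite -[a *: x]addr0 sp_lin sp0 addr0. Qed.

Lemma sp_sum I r (P : pred I) (F : I -> M) z :
  sp (\sum_(i <- r | P i) F i) z = \sum_(i <- r | P i) sp (F i) z.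
Proof. exact: (big_morph (sp^~ z) (fun x y => spD x y z) (sp0 z)). Qed.

Definition coord (x : M) (i : 'I_3) : D := sp x (m i).

(* [x] is [rpart x + eps dpart x] in the basis [m]. *)
Definition rpart (x : M) : vec := vof (fun i => (coord x i).1).
Definition dpart (x : M) : vec := vof (fun i => (coord x i).2).
Definition of_parts (p q : vec) : M := \sum_i ((vget p i, vget q i) : D) *: m i.

Lemma coord_sum (c : 'I_3 -> D) j : coord (\sum_i c i *: m i) j = c j.
Proof.
rewrite /coord sp_sum (bigD1 j) //= spZ m_orthonormal eqxx mulr1 big1 ?addr0 // => i ij.
by rewrite spZ m_orthonormal (negbTE ij) mulr0.
Qed.

Lemma coord_decomp x : x = \sum_i coord x i *: m i.
Proof.
have [_ /(_ x) [c xE]] := m_basis.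
by rewrite {1}xE; apply: eq_bigr => i _; rewrite xE coord_sum.
Qed.

Lemma parts_inj x y : rpart x = rpart y -> dpart x = dpart y -> x = y.
Proof.
move=> /vec3_eq[/= ? ? ?] /vec3_eq[/= ? ? ?].
rewrite (coord_decomp x) (coord_decomp y); apply: eq_bigr => i _; congr (_ *: _).
by case: (ord3P i) => [|[|]] ->; apply: injective_projections.
Qed.

Lemma rpart_of_parts p q : rpart (of_parts p q) = p.
Proof. by rewrite /rpart /vof /= !coord_sum; case: p => [[]]. Qed.

Lemma dpart_of_parts p q : dpart (of_parts p q) = q.
Proof. by rewrite /dpart /vof /= !coord_sum; case: q => [[]]. Qed.

Lemma rpart0 : rpart 0 = vzero. Proof. by rewrite /rpart /vof /coord /= !sp0. Qed.
Lemma dpart0 : dpart 0 = vzero. Proof. by rewrite /dpart /vof /coord /= !sp0. Qed.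

Lemma rpartD x y : rpart (x + y) = vadd (rpart x) (rpart y).
Proof. by rewrite /rpart /vof /coord /= !spD. Qed.

Lemma dpartD x y : dpart (x + y) = vadd (dpart x) (dpart y).
Proof. by rewrite /dpart /vof /coord /= !spD. Qed.

Lemma rpartZ a x : rpart (a *: x) = vscale a.1 (rpart x).
Proof. by rewrite /rpart /vof /coord /= !spZ. Qed.

Lemma dpartZ a x : dpart (a *: x) = vadd (vscale a.1 (dpart x)) (vscale a.2 (rpart x)).
Proof. by rewrite /dpart /rpart /vof /coord /= !spZ. Qed.

Lemma rpart_rscale r x : rpart (rscale r x) = vscale r (rpart x).
Proof. exact: rpartZ. Qed.

Lemma dpart_rscale r x : dpart (rscale r x) = vscale r (dpart x).
Proof. by rewrite /rscale dpartZ; apply/vec3_eq; rewrite /vadd /vscale /=; split; ring. Qed.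

Lemma rpart_basis i : rpart (m i) = vunit i.
Proof. by rewrite /rpart /vunit /vof /coord /= !m_orthonormal; case: (ord3P i) => [|[|]] ->. Qed.

Lemma rpart_dir (v : 'I_3 -> R) : rpart (\sum_k rscale (v k) (m k)) = vof v.
Proof.
rewrite big_ord3 !rpartD !rpart_rscale !rpart_basis.
by apply/vec3_eq; rewrite /vunit /vof /vadd /vscale /=; split; ring.
Qed.

Lemma spE x y :
  sp x y = (vdot (rpart x) (rpart y), vdot (rpart x) (dpart y) + vdot (dpart x) (rpart y)).
Proof.
rewrite {1}(coord_decomp x) sp_sum big_ord3 !spZ ![sp (m _) y]spC.
by rewrite /rpart /dpart /vof /vdot /coord /= !dual_addE !dual_mulE /=; congr pair; ring.
Qed.

Lemma in_epsME x : in_epsM x <-> rpart x = vzero.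
Proof.
split=> [[y ->]|x0]; first by rewrite rpartZ; apply/vec3_eq; rewrite /vscale /=; split; ring.
exists (of_parts (dpart x) vzero); apply: parts_inj.
  by rewrite rpartZ x0; apply/vec3_eq; rewrite /vscale /=; split; ring.
by rewrite dpartZ rpart_of_parts; apply/vec3_eq; rewrite /vscale /vadd /=; split; ring.
Qed.

Lemma of_parts_eta x : x = of_parts (rpart x) (dpart x).
Proof. by apply: parts_inj; rewrite ?rpart_of_parts ?dpart_of_parts. Qed.

Lemma rpartB x y : rpart (x - y) = vadd (rpart x) (vscale (-1) (rpart y)).
Proof. by rewrite -scaleN1r rpartD rpartZ. Qed.

Lemma coord_cross x y l :
  coord (cross sp m x y) l = \sum_i \sum_j coord x i * coord y j * dualr (levi R i j l).
Proof.
rewrite /cross {1}/coord sp_sum; apply: eq_bigr => i _.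
by rewrite sp_sum; apply: eq_bigr => j _; exact: coord_sum.
Qed.

Lemma rpart_cross x y : rpart (cross sp m x y) = vcross (rpart x) (rpart y).
Proof.
rewrite /rpart /vof /= !coord_cross !big_ord3 /levi /dualr /vcross /=.
by congr (_, _, _); field.
Qed.

Lemma dpart_cross x y :
  dpart (cross sp m x y) = vadd (vcross (dpart x) (rpart y)) (vcross (rpart x) (dpart y)).
Proof.
rewrite /dpart /rpart /vof /= !coord_cross !big_ord3 /levi /dualr /vcross /vadd /=.
by congr (_, _, _); field.
Qed.

Lemma triple_eq0E x y z : sp (cross sp m x y) z = 0 <->
  vdet (rpart x) (rpart y) (rpart z) = 0 /\
  vdet_diff (rpart x) (rpart y) (rpart z) (dpart x) (dpart y) (dpart z) = 0.
Proof.
have -> : sp (cross sp m x y) z = (vdet (rpart x) (rpart y) (rpart z),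
    vdet_diff (rpart x) (rpart y) (rpart z) (dpart x) (dpart y) (dpart z)).
  rewrite spE rpart_cross dpart_cross /vdet_diff /vdet /vdot /vcross /vadd /=.
  by congr pair; ring.
by split=> [[-> ->]|[-> ->]].
Qed.

Lemma triple_eq0_swap x y z : sp (cross sp m x y) z = 0 -> sp (cross sp m y x) z = 0.
Proof.
rewrite !triple_eq0E => -[d0 dd0]; rewrite -[0]oppr0; split; [rewrite -{1}d0 | rewrite -dd0];
  by rewrite /vdet_diff /vdet /vdot /vcross /=; ring.
Qed.

Lemma triple_eq0_rot x y z : sp (cross sp m x y) z = 0 -> sp (cross sp m y z) x = 0.
Proof.
rewrite !triple_eq0E => -[d0 dd0]; split; [rewrite -{1}d0 | rewrite -dd0];
  by rewrite /vdet_diff /vdet /vdot /vcross /=; ring.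
Qed.

Lemma comb_triple_eq0 x y z : D_comb x y z -> sp (cross sp m x y) z = 0.
Proof.
case=> a [b ->]; rewrite triple_eq0E rpartD dpartD !rpartZ !dpartZ.
by rewrite /vdet_diff /vdet /vdot /vcross /vadd /vscale /=; split; ring.
Qed.

(* If [rpart x] and [rpart y] were parallel, [eps] times a suitable real
   combination of [x] and [y] would vanish. *)
Lemma D_indep2_vcross x y : D_indep2 x y -> vcross (rpart x) (rpart y) <> vzero.
Proof.
move=> xy c0; have [px0|/eqP px0] := eqVneq (rpart x) vzero.
  suff /xy[/(congr1 snd)/eqP] : eps R *: x + 0 *: y = 0 by rewrite oner_eq0.
  apply: parts_inj; rewrite scale0r addr0 ?rpartZ ?dpartZ px0 ?rpart0 ?dpart0;
    by apply/vec3_eq; rewrite /vadd /vscale /=; split; ring.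
set a : D := (0, - vdot (rpart x) (rpart y)); set b : D := (0, vdot (rpart x) (rpart x)).
suff /xy[_ b0] : a *: x + b *: y = 0.
  by move: (vdot_self_neq0 px0); rewrite -[vdot _ _]/(b.2) b0 eqxx.
apply: parts_inj; rewrite ?rpartD ?dpartD ?rpartZ ?dpartZ ?rpart0 ?dpart0 /=.
  by apply/vec3_eq; rewrite /vscale /vadd /=; split; ring.
have := congr1 (fun w => vcross w (rpart x)) c0; move/vec3_eq.
rewrite /vcross /vzero /= !mul0r subrr => -[c1 c2 c3].
apply/vec3_eq; rewrite /vadd /vscale /vdot /=.
by split; [rewrite -[RHS]c1 | rewrite -[RHS]c2 | rewrite -[RHS]c3]; ring.
Qed.

Lemma triple_eq0_comb x y z : D_indep2 x y -> sp (cross sp m x y) z = 0 -> D_comb z x y.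
Proof.
move=> xy /triple_eq0E[d0 dd0].
have [a [b [c [d [rE dE]]]]] := vdet_diff_eq0_span (D_indep2_vcross xy) d0 dd0.
by exists (a, c), (b, d); apply: parts_inj; rewrite ?rpartD ?dpartD ?rpartZ ?dpartZ.
Qed.

Lemma rscaleDl (r s : R) (x : M) : rscale (r + s) x = rscale r x + rscale s x.
Proof. by rewrite /rscale -scalerDl /dualr dual_addE /= addr0. Qed.

Lemma rscaleA (r s : R) (x : M) : rscale r (rscale s x) = rscale (r * s) x.
Proof. by rewrite /rscale scalerA /dualr dual_mulE /= mulr0 mul0r addr0. Qed.

Lemma rscaleN1 (x : M) : rscale (-1) x = - x.
Proof. by rewrite /rscale -scaleN1r /dualr dual_oppE dual_oneE /= oppr0. Qed.

Lemma real_span3_0 (p : 'I_3 -> M) : real_span3 p 0.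
Proof. by exists (fun _ => 0); rewrite big1 // => i _; rewrite /rscale /dualr scale0r. Qed.

Lemma real_span3D (p : 'I_3 -> M) x y :
  real_span3 p x -> real_span3 p y -> real_span3 p (x + y).
Proof.
case=> r ->; case=> s ->; exists (fun i => r i + s i).
by rewrite -big_split; apply: eq_bigr => i _; rewrite rscaleDl.
Qed.

Lemma real_span3Z (p : 'I_3 -> M) (r : R) x : real_span3 p x -> real_span3 p (rscale r x).
Proof.
case=> s ->; exists (fun i => r * s i).
by rewrite {1}/rscale scaler_sumr; apply: eq_bigr => i _; exact: rscaleA.
Qed.

(* The point of [E] at position [c] with respect to the origin [span_R m]. *)
Definition point (c : vec) (x : M) : Prop := dpart x = vcross c (rpart x).

Lemma point_rcomb c (r : 'I_3 -> R) :
  \sum_i rscale (r i) (of_parts (vunit i) (vcross c (vunit i)))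
  = of_parts (vof r) (vcross c (vof r)).
Proof.
apply: parts_inj; rewrite big_ord3 ?rpartD ?dpartD ?rpart_rscale ?dpart_rscale;
  rewrite ?rpart_of_parts ?dpart_of_parts;
  by apply/vec3_eq; rewrite /vunit /vof /vadd /vscale /vcross /=; split; ring.
Qed.

Lemma point_in_E c : in_E sp (point c).
Proof.
split.
- exists (fun i => of_parts (vunit i) (vcross c (vunit i))); split.
    move=> r; rewrite point_rcomb => /(congr1 rpart); rewrite rpart_of_parts rpart0 => r0 i.
    by rewrite -(vofK r) r0; case: (ord3P i) => [|[|]] ->.
  move=> x; split=> [xc|[r ->]]; last first.
    by rewrite point_rcomb /point rpart_of_parts dpart_of_parts.
  by exists (vget (rpart x)); rewrite point_rcomb vgetK -xc -of_parts_eta.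
- by move=> x y xc yc; rewrite spE /= xc yc /vdot /vcross /=; ring.
- move=> x xc /in_epsME x0; apply: parts_inj; rewrite ?xc x0 ?rpart0 ?dpart0 //.
  by apply/vec3_eq; rewrite /vcross /=; split; ring.
Qed.

Lemma lift_rpart X i x : is_lift m X i x -> rpart x = vunit i.
Proof.
case=> _ /in_epsME; rewrite rpartB rpart_basis /vunit /vof => /vec3_eq[/= ? ? ?].
by apply/vec3_eq => /=; split; lra.
Qed.

Lemma point_lift c i x : is_lift m (point c) i x -> x = of_parts (vunit i) (vcross c (vunit i)).
Proof. by move=> lx; rewrite (of_parts_eta x) (lift_rpart lx) -(lift_rpart lx); case: lx => ->. Qed.

Lemma rpart_levi (e : 'I_3 -> M) (d : 'I_3 -> R) i : (forall j, rpart (e j) = vunit j) ->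
  rpart (\sum_j \sum_k rscale (levi R i j k * d k) (e j)) = vcross (vof d) (vunit i).
Proof.
move=> eE; rewrite !big_ord3 !rpartD !rpart_rscale !eE.
by case: (ord3P i) => [|[|]] ->; rewrite /levi /vof /vunit /vcross /vadd /vscale /=;
  apply/vec3_eq => /=; split; field.
Qed.

Lemma translate_point a (d : 'I_3 -> R) : translate m (point a) d (point (vadd a (vof d))).
Proof.
move=> eP eQ lP lQ i; have eP_rpart j : rpart (eP j) = vunit j := lift_rpart (lP j).
rewrite (point_lift (lQ i)) (point_lift (lP i)).
apply: parts_inj; rewrite ?rpartD ?dpartD ?rpartZ ?dpartZ ?rpart_of_parts ?dpart_of_parts;
  rewrite ?(rpart_levi _ _ eP_rpart);
  by apply/vec3_eq; rewrite /vunit /vof /vadd /vscale /vcross /=; split; ring.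
Qed.

(* With [n = |p|], the unit of [z = p + eps q] is [(p + eps moment p q) / n]
   and [z = (n + eps (q.p) / n) u]. *)
Lemma axis_unit_exists z : rpart z <> vzero ->
  exists2 u, axis_unit sp z u & exists k : R,
    rpart u = vscale k (rpart z) /\ dpart u = vscale k (moment (rpart z) (dpart z)).
Proof.
set p := rpart z; set q := dpart z => p0.
have N0 := vdot_self_gt0 p0; set N := vdot p p in N0.
set n := Num.sqrt N; have n0 : n != 0 by rewrite gt_eqF ?sqrtr_gt0.
have nn : n * n = N by rewrite -expr2 sqr_sqrtr ?ltW.
have pm := vdot_moment q p0.
exists (of_parts (vscale n^-1 p) (vscale n^-1 (moment p q))); last first.
  by exists n^-1; rewrite rpart_of_parts dpart_of_parts.
split.
  rewrite spE rpart_of_parts dpart_of_parts dual_oneE; congr pair.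
    have ->: vdot (vscale n^-1 p) (vscale n^-1 p) = n^-1 * n^-1 * N by rewrite /N /vdot /vscale /=; ring.
    by rewrite -nn; field.
  have -> : vdot (vscale n^-1 p) (vscale n^-1 (moment p q)) +
    vdot (vscale n^-1 (moment p q)) (vscale n^-1 p) = 2 * n^-1 * n^-1 * vdot p (moment p q).
    by rewrite /vdot /vscale /=; ring.
  by rewrite pm mulr0.
exists n, (vdot q p / n); split; first by rewrite sqrtr_gt0.
apply: parts_inj.
  by rewrite rpartZ rpart_of_parts /=; apply/vec3_eq; rewrite /vscale /=; split; field.
rewrite dpartZ rpart_of_parts dpart_of_parts /= /moment -/N -nn.
by apply/vec3_eq; rewrite /vscale /vadd /=; split; field.
Qed.

Lemma axis_meets_point z a (v : 'I_3 -> R) : rpart z <> vzero ->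
  vdot (rpart z) (vof v) = 0 -> axis_meets (rpart z) (dpart z) a (vof v) ->
  axis_meets_orth sp m z (point a) v.
Proof.
move=> p0 pv [t tE]; have [u uz [k [ru du]]] := axis_unit_exists p0.
exists u; split=> //; split.
  exists (point (vadd a (vof (fun i => t * v i)))); split; first exact: point_in_E.
  split; last by exists t; exact: translate_point.
  rewrite /point du ru tE.
  by apply/vec3_eq; rewrite /vscale /vadd /vcross /vof /=; split; ring.
by rewrite spE /= ru rpart_dir -[RHS](mulr0 k) -pv /vdot /vscale /=; ring.
Qed.

(* The real parts of a real basis [p] of [X] form an invertible matrix [G],
   since [X] meets [eps M] trivially; the lift of [e_i] has coordinates
   [e_i G^-1] in [p]. *)
Lemma lifts_exist X : in_E sp X -> exists e : 'I_3 -> M, forall i, is_lift m X i (e i).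
Proof.
case=> [[p [pfree pspan]]] _ Xeps.
pose G : 'M[R]_3 := \matrix_(k, l) vget (rpart (p k)) l.
have rpart_comb (w : 'rV[R]_3) :
    rpart (\sum_l rscale (w 0 l) (p l)) = vof (fun j => (w *m G) 0 j).
  rewrite big_ord3 !rpartD !rpart_rscale; apply/vec3_eq; rewrite /vof /G /=.
  by rewrite !mxE !big_ord3 !mxE /vadd /vscale /vget /=; split; ring.
have G_unit : G \in unitmx.
  rewrite -row_free_unit -kermx_eq0; apply/eqP/row_matrixP => k; rewrite row0.
  set w := row k (kermx G); have wG : w *m G = 0 by rewrite -row_mul mulmx_ker row0.
  have w0 : \sum_l rscale (w 0 l) (p l) = 0.
    apply: Xeps; first by apply/pspan; exists (fun l => w 0 l).
    by apply/in_epsME; rewrite rpart_comb wG; apply/vec3_eq; rewrite /vof !mxE.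
  by apply/rowP => l; rewrite [RHS]mxE; exact: pfree w0 l.
exists (fun i => \sum_l rscale ((delta_mx 0 i *m invmx G : 'rV[R]_3) 0 l) (p l)) => i; split.
  by apply/pspan; eexists.
apply/in_epsME; rewrite rpartB rpart_comb mulmxKV // rpart_basis.
by apply/vec3_eq; rewrite /vof /vunit /vadd /vscale /= !mxE /=; split; ring.
Qed.

Lemma E_rcomb X e : in_E sp X -> (forall i, is_lift m X i (e i)) ->
  forall x, X x -> x = \sum_i rscale (vget (rpart x) i) (e i).
Proof.
move=> [[p [_ pspan]] _ Xeps] lift x Xx.
set y := \sum_i rscale (vget (rpart x) i) (e i).
have Xy : X y.
  apply/pspan; apply: (big_ind (real_span3 p)) => [|? ?|i _].
  - exact: real_span3_0.
  - exact: real_span3D.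
  - by apply: real_span3Z; apply/pspan; case: (lift i).
have y_rpart : rpart y = rpart x.
  rewrite /y big_ord3 !rpartD !rpart_rscale !(lift_rpart (lift _)) -[RHS]vgetK.
  by apply/vec3_eq; rewrite /vunit /vof /vadd /vscale /=; split; ring.
apply/eqP; rewrite -subr_eq0; apply/eqP/Xeps.
  by apply/pspan; rewrite -rscaleN1; apply: real_span3D; [|apply: real_span3Z]; apply/pspan.
by apply/in_epsME; rewrite rpartB y_rpart; apply/vec3_eq; rewrite /vadd /vscale /=; split; ring.
Qed.

(* The condition [Du (x o y) = 0] on lifts says that [e_j |-> dpart (e_j)] is
   antisymmetric, i.e. a cross product [vcross a]. *)
Lemma E_point X : in_E sp X -> exists a, forall x, X x -> point a x.
Proof.
move=> XE; have [e lift] := lifts_exist XE; have Xe i := proj1 (lift i).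
have anti i j : vdot (vunit i) (dpart (e j)) + vdot (dpart (e i)) (vunit j) = 0.
  by case: XE => _ Xdu _; have := Xdu _ _ (Xe i) (Xe j); rewrite spE /= !(lift_rpart (lift _)).
exists ((dpart (e o1)).2, (dpart (e o2)).1.1, (dpart (e o0)).1.2) => x Xx.
rewrite /point {1}(E_rcomb XE lift Xx) big_ord3 !dpartD !dpart_rscale.
move: (anti o0 o0) (anti o1 o1) (anti o2 o2) (anti o0 o1) (anti o0 o2) (anti o1 o2).
move: (dpart (e o0)) (dpart (e o1)) (dpart (e o2)) (rpart x) =>
  [[a0 a1] a2] [[b0 b1] b2] [[c0 c1] c2] [[x0 x1] x2].
rewrite /vdot /vunit /vof /= => S00 S11 S22 S01 S02 S12.
have [-> -> ->] : [/\ a0 = 0, b1 = 0 & c2 = 0] by split; lra.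
have [-> -> ->] : [/\ b0 = - a1, c0 = - a2 & c1 = - b2] by split; lra.
by apply/vec3_eq; rewrite /vadd /vscale /vcross /vget /=; split; ring.
Qed.

Lemma translate_center X Y a b (d : 'I_3 -> R) : in_E sp X -> in_E sp Y ->
    (forall x, X x -> point a x) -> (forall y, Y y -> point b y) ->
  translate m X d Y -> b = vadd a (vof d).
Proof.
move=> XE YE Xa Yb XY; have [eX liftX] := lifts_exist XE; have [eY liftY] := lifts_exist YE.
have eX_rpart j : rpart (eX j) = vunit j := lift_rpart (liftX j).
apply: vcross_vunit_inj => i; have := congr1 dpart (XY _ _ liftX liftY i).
rewrite dpartD dpartZ (rpart_levi _ _ eX_rpart) (Yb _ (proj1 (liftY i))).
rewrite (Xa _ (proj1 (liftX i))) eX_rpart (lift_rpart (liftY i)) => ->.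
by apply/vec3_eq; rewrite /vadd /vscale /vcross /=; split; ring.
Qed.

Lemma axis_meets_orth_parts z A a (v : 'I_3 -> R) : in_E sp A ->
    (forall x, A x -> point a x) -> axis_meets_orth sp m z A v ->
  exists r t al be, [/\ rpart z = vscale al r,
    dpart z = vadd (vscale al (vcross (vadd a (vscale t (vof v))) r)) (vscale be r)
    & vdot r (vof v) = 0].
Proof.
move=> AE Aa [u [[_ [al [be [_ ->]]]] [[P [PE [Pu [t AP]]]] orth]]].
have [b Pb] := E_point PE.
have bE : b = vadd a (vscale t (vof v)).
  rewrite (translate_center AE PE Aa Pb AP).
  by apply/vec3_eq; rewrite /vadd /vscale /vof /=; split; ring.
exists (rpart u), t, al, be; split.
- by rewrite rpartZ.
- by rewrite dpartZ (Pb _ Pu) bE.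
- by move: orth; rewrite spE /Re /= rpart_dir.
Qed.

Lemma comb_common_perpendicular z1 z2 z3 :
    ~ in_epsM z1 -> ~ in_epsM z2 -> ~ in_epsM z3 -> D_indep2 z1 z2 -> D_comb z3 z1 z2 ->
  exists (A : M -> Prop) (v : 'I_3 -> R),
    in_E sp A /\ (exists k, v k != 0) /\ axis_meets_orth sp m z1 A v /\
    axis_meets_orth sp m z2 A v /\ axis_meets_orth sp m z3 A v.
Proof.
move=> /in_epsME p1 /in_epsME p2 /in_epsME p3 z12 [al [be z3E]].
have r3E : rpart z3 = vadd (vscale al.1 (rpart z1)) (vscale be.1 (rpart z2)).
  by rewrite z3E rpartD !rpartZ.
have d3E : dpart z3 = vadd (vadd (vscale al.1 (dpart z1)) (vscale al.2 (rpart z1)))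
    (vadd (vscale be.1 (dpart z2)) (vscale be.2 (rpart z2))).
  by rewrite z3E dpartD !dpartZ.
have v0 := D_indep2_vcross z12; set v := vcross (rpart z1) (rpart z2) in v0.
have [a [m1 m2 m3]] := common_perpendicular p1 p2 p3 v0 r3E d3E.
exists (point a), (vget v); split; first exact: point_in_E.
split; first exact: vget_neq0.
split; [|split]; apply: axis_meets_point; rewrite ?vgetK //;
  by rewrite ?r3E /v /vdot /vcross /vadd /vscale /=; ring.
Qed.

Lemma common_perpendicular_triple_eq0 z1 z2 z3 :
  (exists (A : M -> Prop) (v : 'I_3 -> R),
    in_E sp A /\ (exists k, v k != 0) /\ axis_meets_orth sp m z1 A v /\
    axis_meets_orth sp m z2 A v /\ axis_meets_orth sp m z3 A v) ->
  sp (cross sp m z1 z2) z3 = 0.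
Proof.
case=> A [v [AE [/vof_neq0 v0 [M1 [M2 M3]]]]]; have [a Aa] := E_point AE.
have [r1 [t1 [al1 [be1 [P1 Q1 R1]]]]] := axis_meets_orth_parts AE Aa M1.
have [r2 [t2 [al2 [be2 [P2 Q2 R2]]]]] := axis_meets_orth_parts AE Aa M2.
have [r3 [t3 [al3 [be3 [P3 Q3 R3]]]]] := axis_meets_orth_parts AE Aa M3.
apply/triple_eq0E; rewrite P1 P2 P3 Q1 Q2 Q3.
by have /= := common_perpendicular_vdet_eq0 a t1 t2 t3 al1 al2 al3 be1 be2 be3 v0 R1 R2 R3.
Qed.

End Coordinates.

Unset Implicit Arguments.
Set Strict Implicit.
Theorem proposition15 (R : realType) (M : lmodType (dual R))
    (sp : M -> M -> dual R) (m : 'I_3 -> M)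
    (Hsp : scalar_product sp) (Hm : D_basis m) (Hon : orthonormal3 sp m)
    (z1 z2 z3 : M)
    (Hz1 : ~ in_epsM z1) (Hz2 : ~ in_epsM z2) (Hz3 : ~ in_epsM z3)
    (H12 : D_indep2 z1 z2) (H13 : D_indep2 z1 z3) (H23 : D_indep2 z2 z3) :
  let i_cond := sp (cross sp m z1 z2) z3 = 0 in
  let ii_cond := D_comb z1 z2 z3 \/ D_comb z2 z1 z3 \/ D_comb z3 z1 z2 in
  let iii_cond :=
    exists (A : M -> Prop) (v : 'I_3 -> R),
      in_E sp A /\ (exists k, v k != 0) /\
      axis_meets_orth sp m z1 A v /\ axis_meets_orth sp m z2 A v /\
      axis_meets_orth sp m z3 A v in
  [/\ i_cond <-> ii_cond, ii_cond <-> iii_cond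
    & ii_cond -> D_comb z1 z2 z3 /\ D_comb z2 z1 z3 /\ D_comb z3 z1 z2].
Proof.
move=> i_cond ii_cond iii_cond.
have i_all : i_cond -> D_comb z1 z2 z3 /\ D_comb z2 z1 z3 /\ D_comb z3 z1 z2.
  rewrite /i_cond => t0; split; [|split].
  - exact: (triple_eq0_comb Hsp Hm Hon H23 (triple_eq0_rot Hsp Hm Hon t0)).
  - have t1 := triple_eq0_rot Hsp Hm Hon (triple_eq0_rot Hsp Hm Hon t0).
    exact: (triple_eq0_comb Hsp Hm Hon H13 (triple_eq0_swap Hsp Hm Hon t1)).
  - exact: (triple_eq0_comb Hsp Hm Hon H12 t0).
have ii_i : ii_cond -> i_cond.
  rewrite /i_cond; case=> [|[]] /(comb_triple_eq0 Hsp Hm Hon) //.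
  - by move/(triple_eq0_swap Hsp Hm Hon).
  - by move/(triple_eq0_rot Hsp Hm Hon).
split; [split=> [/i_all[_ [_ ?]]|]; [by right; right | exact: ii_i] | | by move/ii_i/i_all].
split=> [/ii_i/i_all[_ [_ z3E]]|/(common_perpendicular_triple_eq0 Hsp Hm Hon)/i_all[? _]].
  exact: (comb_common_perpendicular Hsp Hm Hon Hz1 Hz2 Hz3 H12 z3E).
by left.
Qed.
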